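(* Under the setting and assumptions of the AIRC closed loop (with $A$ Metzler and Hurwitz, $g_1\neq0$, all parameters positive), let $(z_1^*(\eta),z_2^*(\eta))$ denote the controller components of the unique equilibrium with $z_1^*>0$, i.e. $z_1^*(\eta)$ is the unique positive root of $P_1(z)=\eta g_1k_iz^2+(g_0-r)\eta z-g_nk_p\mu r$ and $z_2^*=\mu/(\eta z_1^* )$. Then, as $\eta\to\infty$: (1) if $r>g_0$, then $(z_1^*,z_2^* )\to\big((r-g_0)/(g_1k_i),\,0\big)$; (2) if $r<g_0$, then $(z_1^*,z_2^* )\to\big(0,\,(g_0-r)/(g_nrk_p)\big)$; (3) if $r=g_0$, then for every $\eta>0$, $z_1^*=\sqrt{\dfrac{g_nk_p\mu r}{\eta g_1k_i}}$ and $z_2^*=\sqrt{\dfrac{\theta g_1k_i}{\eta g_nk_p}}$; in particular both tend to $0$ while $\eta z_1^*z_2^*=\mu$ for all $\eta$.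
   Context: Setting: $A\in\mathbb{R}^{n\times n}$ Metzler (nonnegative off-diagonal entries) and Hurwitz stable (all eigenvalues with negative real part), $b_0\in\mathbb{R}^n_{\ge0}$, $\mu,\theta,k_i,k_p,\eta>0$, $r:=\mu/\theta$, $g_1:=-e_n^TA^{-1}e_1$, $g_n:=-e_n^TA^{-1}e_n$, $g_0:=-e_n^TA^{-1}b_0$, with $g_1\ne0$. The closed-loop system is $\dot x=Ax+k_iz_1e_1-k_px_nz_2e_n+b_0$, $\dot z_1=\mu-\eta z_1z_2$, $\dot z_2=\theta x_n-\eta z_1z_2$, and $e_i$ denotes the $i$-th standard basis vector. *)

From HB Require Import structures.
From mathcomp Require Import all_boot all_order all_algebra.
From mathcomp Require Import complex.
From mathcomp Require Import all_classical all_reals all_analysis.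
Set Implicit Arguments. Unset Strict Implicit. Unset Printing Implicit Defensive.
Import Order.TTheory GRing.Theory Num.Theory.
Local Open Scope ring_scope.

Definition metzler (R : realType) (n : nat) (A : 'M[R]_n) : Prop :=
  forall i j : 'I_n, i != j -> 0 <= A i j.

Definition hurwitz (R : realType) (n : nat) (A : 'M[R]_n) : Prop :=
  forall z : R[i], root (map_poly (real_complex R) (char_poly A)) z ->
    complex.Re z < 0.

(* Indices: e_1 is ord0, e_n is ord_max (matrices are (n+1) x (n+1)). *)
Definition g1 (R : realType) (n : nat) (A : 'M[R]_n.+1) : R :=
  - (invmx A) ord_max ord0.
Definition gn (R : realType) (n : nat) (A : 'M[R]_n.+1) : R :=
  - (invmx A) ord_max ord_max.
Definition g0 (R : realType) (n : nat) (A : 'M[R]_n.+1) (b0 : 'cV[R]_n.+1) : R :=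
  - (invmx A *m b0) ord_max ord0.

Definition P1 (R : realType) (g1 g0 gn ki kp mu r eta z : R) : R :=
  eta * g1 * ki * z ^+ 2 + (g0 - r) * eta * z - gn * kp * mu * r.

From HB Require Import structures.
From mathcomp Require Import all_boot all_order all_algebra.
From mathcomp Require Import complex.
From mathcomp Require Import all_classical all_reals all_analysis.
From mathcomp Require Import ring lra.
Set Implicit Arguments. Unset Strict Implicit. Unset Printing Implicit Defensive.
Import Order.TTheory GRing.Theory Num.Theory numFieldNormedType.Exports.
Local Open Scope ring_scope.
Local Open Scope classical_set_scope.

(* Hurwitz stability makes char_poly A nonzero on [0, oo), so t - A is invertible
   for t >= 0.  The set of t >= 0 such that the Z-matrix t - A maps some positive
   vector to a positive vector contains all large t and is open; it is also closed
   in [0, oo), because such a matrix is inverse-positive, so (t - A)^-1 1 is a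
   positive witness that survives a small decrease of t.  Hence it contains 0 and
   -A^-1 >= 0, so g1 > 0 and gn >= 0.  With a = g1 ki, b = g0 - r, c = gn kp mu r,
   the equation P1 = 0 reads eta z (a z + b) = c, which gives O(1/eta) bounds on
   the distance of (z1, z2) to the limits when b <> 0, and z1^2 = c / (a eta)
   when b = 0. *)

Section ZMatrix.
Variables (R : realFieldType) (N : nat).
Implicit Types (M : 'M[R]_N) (x : 'cV[R]_N).

Definition zmatrix M := forall i j, i != j -> M i j <= 0.

Definition semipositive M :=
  exists2 e : 'cV[R]_N, forall i, 0 < e i 0 & forall i, 0 < (M *m e) i 0.

Lemma semipositive_zmatrix_nonneg M x : zmatrix M -> semipositive M ->
  (forall i, 0 <= (M *m x) i 0) -> forall i, 0 <= x i 0.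
Proof.
move=> zM [e e_gt0 Me_gt0] Mx_ge0 i.
have [k _ kmin] := @arg_minP _ _ _ i predT (fun k => x k 0 / e k 0) isT.
set c := x k 0 / e k 0.
have x_ge j : c * e j 0 <= x j 0 by rewrite -ler_pdivlMr //; exact: kmin.
have c_ge0 : 0 <= c.
  rewrite leNgt; apply/negP => c_lt0.
  (* x >= c e with equality at row k, where M is nonpositive off the diagonal *)
  have : (M *m x) k 0 <= c * (M *m e) k 0.
    rewrite !mxE mulr_sumr; apply: ler_sum => j _; rewrite mulrCA.
    have [<-|kj] := eqVneq k j; first by rewrite /c divfK ?gt_eqF.
    by apply: ler_wnM2l; [exact: zM | exact: x_ge].
  have := Mx_ge0 k; have : c * (M *m e) k 0 < 0 by rewrite nmulr_rlt0.
  lra.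
exact: le_trans (mulr_ge0 c_ge0 (ltW (e_gt0 i))) (x_ge i).
Qed.

Lemma zmatrix_nonneg_pos M x : zmatrix M -> (forall i, 0 <= x i 0) ->
  (forall i, 0 < (M *m x) i 0) -> forall i, 0 < x i 0.
Proof.
move=> zM x_ge0 Mx_gt0 i; rewrite lt_neqAle x_ge0 andbT eq_sym.
apply/negP => /eqP xi0; have := Mx_gt0 i.
rewrite mxE (bigD1 i) //= xi0 mulr0 add0r ltNge; apply/negP/negPn.
by apply: sumr_le0 => j ji; apply: mulr_le0_ge0; [apply: zM; rewrite eq_sym|].
Qed.

End ZMatrix.

Section MetzlerHurwitz.
Variables (R : realType) (N : nat) (A : 'M[R]_N).
Hypotheses (A_metzler : metzler A) (A_hurwitz : hurwitz A).

Lemma zmatrix_shift t : zmatrix (t%:M - A).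
Proof.
move=> i j ij; rewrite !mxE (negbTE ij) mulr0n sub0r oppr_le0.
exact: A_metzler.
Qed.

Lemma shift_mulmx t u (e : 'cV[R]_N) i :
  ((t%:M - A) *m e) i 0 = ((u%:M - A) *m e) i 0 + (t - u) * e i 0.
Proof. by rewrite !mulmxBl !mul_scalar_mx !mxE; ring. Qed.

Lemma semipositive_shift_ge u t :
  semipositive (u%:M - A) -> u <= t -> semipositive (t%:M - A).
Proof.
move=> [e e_gt0 Be_gt0] ut; exists e => // i.
rewrite (shift_mulmx t u) ltr_wpDr //.
by rewrite mulr_ge0 ?subr_ge0 // ltW.
Qed.

Lemma semipositive_shift_large : exists2 T, 0 <= T & semipositive (T%:M - A).
Proof.
(* row sums of T - A are positive once T exceeds the sum of all |A i j| *)
pose S := \sum_i \sum_j `|A i j|.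
have S_ge0 : 0 <= S by rewrite sumr_ge0 // => i _; rewrite sumr_ge0.
exists (1 + S); first lra.
exists (const_mx 1) => [i|i]; first by rewrite mxE.
rewrite mulmxBl mul_scalar_mx !mxE; under eq_bigr do rewrite mxE mulr1.
have rowA : \sum_j A i j <= \sum_j `|A i j| by rewrite ler_sum // => j _; rewrite ler_norm.
have rowS : \sum_j `|A i j| <= S.
  by rewrite /S [leRHS](bigD1 i) //= lerDl sumr_ge0 // => k _; rewrite sumr_ge0.
lra.
Qed.

Lemma semipositive_shift_open s : semipositive (s%:M - A) ->
  exists2 d, 0 < d & forall t, s - d < t -> semipositive (t%:M - A).
Proof.
move=> [e e_gt0 Be_gt0].
pose F k := ((s%:M - A) *m e) k 0 / e k 0.
pose d := \big[Num.min/1]_k F k.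
have d_gt0 : 0 < d.
  apply: (big_ind (fun y => 0 < y)) => [||k _]; last by rewrite divr_gt0.
    exact: ltr01.
  by move=> y z y0 z0; rewrite lt_min y0 z0.
have d_le k : d <= F k by rewrite /d (bigD1 k) //= ge_min lexx.
exists d => // t st; have [ts|ts] := leP s t.
  by apply: (semipositive_shift_ge _ ts); exists e.
exists e => // i; rewrite (shift_mulmx t s).
have := d_le i; rewrite /F ler_pdivlMr // => h.
by have := Be_gt0 i; have := e_gt0 i; nra.
Qed.

Lemma horner_char_poly_neq0 t : 0 <= t -> (char_poly A).[t] != 0.
Proof.
move=> t_ge0; apply/negP => /eqP qt0.
have := @A_hurwitz (t%:C)%C; rewrite /root horner_map qt0 /=.
by rewrite (_ : (0 : R)%:C%C = 0) // eqxx => /(_ isT); rewrite ltNge t_ge0.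
Qed.

Lemma horner_char_poly_mx t :
  map_mx (horner_eval t) (char_poly_mx A) = t%:M - A.
Proof.
by apply/matrixP => i j; rewrite !mxE /horner_eval; case: (i == j); rewrite /= !hornerE.
Qed.

Lemma unitmx_shift t : 0 <= t -> t%:M - A \in unitmx.
Proof.
move=> t_ge0; rewrite unitmxE unitfE -horner_char_poly_mx det_map_mx.
exact: horner_char_poly_neq0.
Qed.

Lemma invmx_shift_sum t : 0 <= t ->
  \sum_i \sum_j invmx (t%:M - A) i j =
  (\sum_i \sum_j \adj (char_poly_mx A) i j).[t] / (char_poly A).[t].
Proof.
move=> t_ge0; have -> : (char_poly A).[t] = \det (t%:M - A).
  by rewrite -horner_char_poly_mx det_map_mx.
rewrite /invmx unitmx_shift // horner_sum mulr_suml.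
apply: eq_bigr => i _; rewrite horner_sum mulr_suml; apply: eq_bigr => j _.
by rewrite -horner_char_poly_mx -map_mx_adj !mxE mulrC.
Qed.

Lemma horner_ratio_small (p q : {poly R}) s : q.[s] != 0 ->
  exists2 t, s < t & (t - s) * (p.[t] / q.[t]) < 1.
Proof.
move=> qs0.
have g_cvg : (t - s) * (p.[t] / q.[t]) @[t --> s] --> 0.
  rewrite -(mul0r (p.[s] / q.[s])) -(subrr s).
  apply: cvgM; first exact: cvgB cvg_id (cvg_cst _).
  by apply: cvgM; [exact: continuous_horner | apply: cvgV => //; exact: continuous_horner].
have [eps /= eps_gt0 small] := iffLR (nbhs_ballP _ _) (cvgr_lt _ g_cvg _ ltr01).
exists (s + eps / 2); first lra.
by apply: small; rewrite /ball /= opprD addrA subrr sub0r normrN ger0_norm; lra.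
Qed.

Lemma semipositive_shift_closed s : 0 <= s ->
  (forall t, s < t -> semipositive (t%:M - A)) -> semipositive (s%:M - A).
Proof.
move=> s_ge0 right_semipos.
have [t st small] := horner_ratio_small
  (\sum_i \sum_j \adj (char_poly_mx A) i j) (horner_char_poly_neq0 s_ge0).
have t_ge0 : 0 <= t by lra.
(* d := (t - A)^-1 1 is positive, and (s - A) d = 1 - (t - s) d stays positive *)
pose d : 'cV[R]_N := invmx (t%:M - A) *m const_mx 1.
have Bd : (t%:M - A) *m d = const_mx 1.
  by rewrite mulmxA mulmxV ?unitmx_shift // mul1mx.
have d_ge0 i : 0 <= d i 0.
  apply: (semipositive_zmatrix_nonneg (zmatrix_shift t) (right_semipos t st)) => k.
  by rewrite Bd mxE.
have d_gt0 i : 0 < d i 0.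
  by apply: (zmatrix_nonneg_pos (zmatrix_shift t) d_ge0) => k; rewrite Bd mxE.
have sum_d : \sum_i d i 0 = (\sum_i \sum_j \adj (char_poly_mx A) i j).[t] / (char_poly A).[t].
  by rewrite -invmx_shift_sum //; apply: eq_bigr => i _; rewrite mxE;
    apply: eq_bigr => j _; rewrite mxE mulr1.
exists d => // i; rewrite (shift_mulmx s t) Bd mxE.
have di_le : d i 0 <= \sum_i d i 0.
  by rewrite (bigD1 i) //= lerDl sumr_ge0 // => k _.
have : (t - s) * d i 0 <= (t - s) * \sum_i d i 0 by rewrite ler_wpM2l // subr_ge0 ltW.
rewrite sum_d in di_le *; lra.
Qed.

Lemma oppmx_shift0 : - A = 0%:M - A.
Proof. by apply/matrixP => i j; rewrite !mxE mul0rn sub0r. Qed.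

Lemma semipositive_oppA : semipositive (- A).
Proof.
(* the set of t >= 0 with t - A semipositive is up-closed, open and closed *)
rewrite oppmx_shift0.
have [T T_ge0 semipos_T] := semipositive_shift_large.
pose S := [set t : R | 0 <= t /\ semipositive (t%:M - A)].
have S_lb : has_lbound S by exists 0 => x [].
have S_ne : S !=set0 by exists T.
pose s := inf S.
have s_ge0 : 0 <= s by apply: lb_le_inf => // x [].
have semipos_s : semipositive (s%:M - A).
  apply: semipositive_shift_closed => // t st.
  have [u [_ semipos_u] ut] := inf_adherent (eps := t - s) ltac:(lra) (conj S_ne S_lb).
  by apply: (semipositive_shift_ge semipos_u); rewrite /s in ut; lra.
have [s0|s_neq0] := eqVneq s 0; first by rewrite -s0.
have [d d_gt0 semipos_near] := semipositive_shift_open semipos_s.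
have S_below : S (Num.max 0 (s - d / 2)).
  split; first by rewrite le_max lexx.
  by apply: semipos_near; rewrite lt_max; apply/orP; right; lra.
have := ge_inf S_lb S_below; rewrite -/s le_max => /orP[|]; lra.
Qed.

Lemma metzler_hurwitz_invmx_le0 i j : invmx A i j <= 0.
Proof.
have A_unit : - A \in unitmx.
  by rewrite oppmx_shift0 unitmx_shift.
have inv_oppA : invmx (- A) = - invmx A.
  by rewrite -scaleN1r invmxZ ?scaleN1r // invrN1 scaleN1r.
pose x := col j (invmx (- A)).
have x_ge0 : forall k, 0 <= x k 0.
  apply: (semipositive_zmatrix_nonneg _ semipositive_oppA) => [k l kl|k].
    by rewrite mxE oppr_le0; exact: A_metzler.
  by rewrite /x colE mulmxA mulmxV // mul1mx mxE ler0n.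
by have := x_ge0 i; rewrite /x mxE inv_oppA mxE oppr_ge0.
Qed.

End MetzlerHurwitz.

Lemma cvg_pinfty_pow_bound (R : realType) (f : R -> R) (L K : R) (k : nat) :
  (forall x, 0 < x -> `|f x - L| ^+ k.+1 <= K / x) -> f x @[x --> +oo] --> L.
Proof.
move=> bound; apply/cvgrPdistC_lt => eps eps_gt0.
have epsk_gt0 : 0 < eps ^+ k.+1 by rewrite exprn_gt0.
near=> x.
have x_gt0 : 0 < x by near: x; exact: nbhs_pinfty_gt.
rewrite -(ltr_pXn2r (ltn0Sn k)) ?nnegrE ?normr_ge0 ?ltW //.
apply: le_lt_trans (bound x x_gt0) _; rewrite ltr_pdivrMr // mulrC -ltr_pdivrMr //.
by near: x; apply: nbhs_pinfty_gt; exact: num_real.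
Unshelve. all: end_near.
Qed.

Section Equilibrium.
Variables (R : realType) (a b c mu : R) (z1 z2 : R -> R).
Hypotheses (a_gt0 : 0 < a) (mu_gt0 : 0 < mu).
Hypothesis z1_root : forall eta, 0 < eta ->
  0 < z1 eta /\ eta * z1 eta * (a * z1 eta + b) = c.
Hypothesis z2_def : forall eta, 0 < eta -> z2 eta = mu / (eta * z1 eta).

Lemma equilibrium_const_gt0 : 0 <= b -> 0 < c.
Proof.
move=> b_ge0; have [z_gt0 <-] := z1_root ltr01.
have az_gt0 : 0 < a * z1 1 by rewrite mulr_gt0.
by rewrite mul1r mulr_gt0 //; lra.
Qed.

Lemma equilibrium_cvg_neg : b < 0 -> 0 <= c ->
  z1 x @[x --> +oo] --> - b / a /\ z2 x @[x --> +oo] --> 0.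
Proof.
move=> b_lt0 c_ge0.
have bounds eta : 0 < eta ->
    `|z1 eta - - b / a| <= c / - b / eta /\ `|z2 eta - 0| <= mu * a / - b / eta.
  move=> eta_gt0; have [z_gt0 root] := z1_root eta_gt0.
  rewrite z2_def // subr0; set z := z1 eta in z_gt0 root *.
  have nb_gt0 : 0 < - b by rewrite oppr_gt0.
  have := (lt_eqF b_lt0, gt_eqF a_gt0, gt_eqF eta_gt0, gt_eqF z_gt0).
  case=> [[[b_neq0 a_neq0] eta_neq0] z_neq0].
  have azb_ge0 : 0 <= a * z + b.
    by rewrite -(pmulr_rge0 _ (mulr_gt0 eta_gt0 z_gt0)) root.
  split.
    rewrite -root ger0_norm; last by rewrite subr_ge0 ler_pdivrMr // mulrC; lra.
    rewrite -subr_ge0 (_ : _ - _ = (a * z + b) ^+ 2 / (a * - b)).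
      by rewrite divr_ge0 ?sqr_ge0 // mulr_ge0 ?ltW // oppr_ge0 ltW.
    by field; rewrite ?b_neq0 ?a_neq0 ?eta_neq0 ?z_neq0.
  rewrite ger0_norm; last by rewrite divr_ge0 ?ltW // mulr_gt0.
  rewrite -subr_ge0 (_ : _ - _ = mu * (a * z + b) / (- b * eta * z)).
    by rewrite divr_ge0 // ?mulr_ge0 // ?ltW // oppr_ge0 ltW.
  by field; rewrite ?b_neq0 ?a_neq0 ?eta_neq0 ?z_neq0.
split; apply: (cvg_pinfty_pow_bound (k := 0)) => eta eta_gt0; rewrite expr1.
  exact: (bounds eta eta_gt0).1.
exact: (bounds eta eta_gt0).2.
Qed.

Lemma equilibrium_cvg_pos : 0 < b ->
  z1 x @[x --> +oo] --> 0 /\ z2 x @[x --> +oo] --> mu * b / c.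
Proof.
move=> b_gt0.
have bounds eta : 0 < eta ->
    `|z1 eta - 0| <= c / b / eta /\ `|z2 eta - mu * b / c| <= mu * a / b / eta.
  move=> eta_gt0; have [z_gt0 root] := z1_root eta_gt0.
  rewrite z2_def // subr0 -root; set z := z1 eta in z_gt0 root *.
  have azb_gt0 : 0 < a * z + b by rewrite addr_gt0 // mulr_gt0.
  have := (gt_eqF b_gt0, gt_eqF a_gt0, gt_eqF eta_gt0, gt_eqF z_gt0, gt_eqF azb_gt0).
  case=> [[[[b_neq0 a_neq0] eta_neq0] z_neq0] azb_neq0].
  split.
    rewrite ger0_norm ?(ltW z_gt0) // -subr_ge0 (_ : _ - _ = a * z ^+ 2 / b).
      by rewrite divr_ge0 ?mulr_ge0 ?sqr_ge0 ?ltW.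
    by field; rewrite ?b_neq0 ?a_neq0 ?eta_neq0 ?z_neq0 ?azb_neq0.
  rewrite (_ : _ - _ = mu * a / (eta * (a * z + b))); last first.
    by field; rewrite ?b_neq0 ?a_neq0 ?eta_neq0 ?z_neq0 ?azb_neq0.
  rewrite ger0_norm; last by rewrite divr_ge0 ?mulr_ge0 ?ltW.
  rewrite -subr_ge0 (_ : _ - _ = mu * a ^+ 2 * z / (b * eta * (a * z + b))).
    by rewrite divr_ge0 ?mulr_ge0 ?ltW.
  by field; rewrite ?b_neq0 ?a_neq0 ?eta_neq0 ?z_neq0 ?azb_neq0.
split; apply: (cvg_pinfty_pow_bound (k := 0)) => eta eta_gt0; rewrite expr1.
  exact: (bounds eta eta_gt0).1.
exact: (bounds eta eta_gt0).2.
Qed.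

Lemma equilibrium_sqrt : b = 0 -> forall eta, 0 < eta ->
  z1 eta = Num.sqrt (c / a / eta) /\ z2 eta = Num.sqrt (mu ^+ 2 * a / c / eta).
Proof.
move=> b0 eta eta_gt0; have [z_gt0 root] := z1_root eta_gt0.
rewrite z2_def // -root b0 addr0; set z := z1 eta in z_gt0 *.
have := (gt_eqF a_gt0, gt_eqF eta_gt0, gt_eqF z_gt0).
case=> [[a_neq0 eta_neq0] z_neq0].
split.
  rewrite (_ : eta * z * (a * z) / a / eta = z ^+ 2); last first.
    by field; rewrite ?a_neq0 ?eta_neq0.
  by rewrite sqrtr_sqr ger0_norm ?(ltW z_gt0).
rewrite (_ : mu ^+ 2 * a / (eta * z * (a * z)) / eta = (mu / (eta * z)) ^+ 2).
  by rewrite sqrtr_sqr ger0_norm // divr_ge0 ?(ltW mu_gt0) // ltW // mulr_gt0.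
by field; rewrite ?a_neq0 ?eta_neq0 ?z_neq0.
Qed.

Lemma equilibrium_cvg_zero : b = 0 -> z1 x @[x --> +oo] --> 0 /\ z2 x @[x --> +oo] --> 0.
Proof.
move=> b0; have c_gt0 : 0 < c by apply: equilibrium_const_gt0; rewrite b0.
split; [apply: (cvg_pinfty_pow_bound (K := c / a) (k := 1))
       | apply: (cvg_pinfty_pow_bound (K := mu ^+ 2 * a / c) (k := 1))];
  move=> eta eta_gt0; have [z1E z2E] := equilibrium_sqrt b0 eta_gt0;
  rewrite ?z1E ?z2E subr0 real_normK ?num_real // sqr_sqrtr //.
  by rewrite !divr_ge0 ?ltW.
by rewrite !divr_ge0 ?mulr_ge0 ?sqr_ge0 ?ltW.
Qed.

End Equilibrium.

Lemma P1_eq0 (R : realType) (g1 g0 gn ki kp mu r eta z : R) :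
  P1 g1 g0 gn ki kp mu r eta z = 0 ->
  eta * z * (g1 * ki * z + (g0 - r)) = gn * kp * mu * r.
Proof. by move=> /eqP; rewrite /P1 subr_eq0 => /eqP <-; ring. Qed.

Theorem mainTheorem2 (R : realType) (n : nat) (A : 'M[R]_n.+1) (b0 : 'cV[R]_n.+1)
  (mu theta ki kp : R) (z1s z2s : R -> R) :
  metzler A -> hurwitz A -> (forall i, 0 <= b0 i ord0) ->
  0 < mu -> 0 < theta -> 0 < ki -> 0 < kp ->
  g1 A != 0 ->
  (forall eta, 0 < eta ->
     0 < z1s eta /\
     P1 (g1 A) (g0 A b0) (gn A) ki kp mu (mu / theta) eta (z1s eta) = 0 /\
     z2s eta = mu / (eta * z1s eta)) ->
  let r := mu / theta in
  (r > g0 A b0 ->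
     z1s x @[x --> +oo] --> (r - g0 A b0) / (g1 A * ki) /\
     z2s x @[x --> +oo] --> 0) /\
  (r < g0 A b0 ->
     z1s x @[x --> +oo] --> 0 /\
     z2s x @[x --> +oo] --> (g0 A b0 - r) / (gn A * r * kp)) /\
  (r = g0 A b0 ->
     (forall eta, 0 < eta ->
        z1s eta = Num.sqrt ((gn A * kp * mu * r) / (eta * g1 A * ki)) /\
        z2s eta = Num.sqrt ((theta * g1 A * ki) / (eta * gn A * kp)) /\
        eta * z1s eta * z2s eta = mu) /\
     z1s x @[x --> +oo] --> 0 /\ z2s x @[x --> +oo] --> 0).
Proof.
move=> A_metzler A_hurwitz _ mu_gt0 theta_gt0 ki_gt0 kp_gt0 g1_neq0 equilibrium r.
have g1_gt0 : 0 < g1 A.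
  by rewrite lt_neqAle eq_sym g1_neq0 oppr_ge0 metzler_hurwitz_invmx_le0.
have gn_ge0 : 0 <= gn A by rewrite oppr_ge0 metzler_hurwitz_invmx_le0.
have r_gt0 : 0 < r by rewrite divr_gt0.
have a_gt0 : 0 < g1 A * ki by rewrite mulr_gt0.
have z1_root eta : 0 < eta -> 0 < z1s eta /\
    eta * z1s eta * (g1 A * ki * z1s eta + (g0 A b0 - r)) = gn A * kp * mu * r.
  by move=> /equilibrium [z_gt0 [/P1_eq0 root _]].
have z2_def eta : 0 < eta -> z2s eta = mu / (eta * z1s eta).
  by move=> /equilibrium [_ []].
have gn_neq0 : 0 <= g0 A b0 - r -> gn A != 0.
  move=> /(equilibrium_const_gt0 a_gt0 z1_root); apply: contraTneq => ->.
  by rewrite !mul0r ltxx.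
split; [move=> r_gt_g0 | split; [move=> r_lt_g0 | move=> r_eq_g0]].
- rewrite -[r - _]opprB.
  apply: (equilibrium_cvg_neg a_gt0 mu_gt0 z1_root z2_def); first lra.
  by rewrite mulr_ge0 ?(ltW r_gt0) // mulr_ge0 ?(ltW mu_gt0) // mulr_ge0 ?(ltW kp_gt0).
- have b_gt0 : 0 < g0 A b0 - r by rewrite subr_gt0.
  have [z1_cvg z2_cvg] := equilibrium_cvg_pos a_gt0 mu_gt0 z1_root z2_def b_gt0.
  split => //; rewrite (_ : _ / _ = mu * (g0 A b0 - r) / (gn A * kp * mu * r)) //.
  by field; rewrite ?(gn_neq0 (ltW b_gt0)) ?gt_eqF.
have b_eq0 : g0 A b0 - r = 0 by rewrite r_eq_g0 subrr.
have gn_neq0' : gn A != 0 by apply: gn_neq0; rewrite b_eq0.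
split; last exact: equilibrium_cvg_zero a_gt0 mu_gt0 z1_root z2_def b_eq0.
move=> eta eta_gt0; have [z1E z2E] := equilibrium_sqrt a_gt0 mu_gt0 z1_root z2_def b_eq0 eta_gt0.
have neq0 := (gt_eqF eta_gt0, gt_eqF mu_gt0, gt_eqF theta_gt0, gt_eqF ki_gt0,
  gt_eqF kp_gt0, gt_eqF g1_gt0).
split; [|split].
- by rewrite z1E; congr Num.sqrt; field; rewrite ?neq0.
- by rewrite z2E /r; congr Num.sqrt; field; rewrite ?neq0 ?gn_neq0'.
have [z_gt0 _] := z1_root eta eta_gt0.
by rewrite z2_def //; field; rewrite ?neq0 gt_eqF.
Qed.
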